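(* Let $p$ be a prime, $q>2$ a power of $p$, and $F$ a field of characteristic $p$ containing $\mathbb{F}_q$ which is a regular extension of $\mathbb{F}_q$. Let $L\in F[x]$ be a $q$-polynomial of $q$-degree $2$ such that $L(x)/x$ is irreducible over $F$, let $E$ be the splitting field of $L$ over $F$, and suppose that the Galois group $G$ of $E$ over $F$, viewed as a subgroup of $GL(2,q)$ via its action on the 2-dimensional $\mathbb{F}_q$-space $V$ of roots of $L$, contains $SL(2,q)$. Let $v_1,v_2$ be an $\mathbb{F}_q$-basis of $V$. Then for every $r\geq1$ the evaluation map $\epsilon_r:H_{2,r}(\mathbb{F}_q)\to E$, $\epsilon_r(P)=P(v_1,v_2)$, is injective.
   Context: $F$ is a regular extension of $\mathbb{F}_q$ means that the only elements of $F$ algebraic over $\mathbb{F}_q$ are those of $\mathbb{F}_q$. $H_{2,r}(\mathbb{F}_q)$ is the space of homogeneous polynomials of degree $r$ in $\mathbb{F}_q[x_1,x_2]$ together with $0$. A $q$-polynomial of $q$-degree $2$ is $a_0x+a_1x^q+a_2x^{q^2}$ with $a_2\neq0$. *)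

From HB Require Import structures.
From mathcomp Require Import all_boot all_order all_algebra all_fingroup all_field.
From mathcomp Require Import mpoly.
Set Implicit Arguments. Unset Strict Implicit. Unset Printing Implicit Defensive.
Import GRing.Theory.
Local Open Scope ring_scope.

Definition qpoly2 (R : nzRingType) (q : nat) (a0 a1 a2 : R) : {poly R} :=
  a0 *: 'X + a1 *: 'X^q + a2 *: 'X^(q ^ 2).

Definition regular_ext (K : finFieldType) (F : fieldType) (iota : {rmorphism K -> F}) :=
  forall a : F, (exists2 P : {poly K}, P != 0 & root (map_poly iota P) a) ->
    exists b : K, a = iota b.

Definition eval2 (K E : nzRingType) (f : K -> E) (v1 v2 : E) (P : {mpoly K[2]}) : E :=
  mmap f (fun i : 'I_2 => if val i == 0%N then v1 else v2) P.

From HB Require Import structures.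
From mathcomp Require Import all_boot all_order all_algebra all_fingroup all_field.
From mathcomp Require Import mpoly ring.
Set Implicit Arguments.
Unset Strict Implicit.
Unset Printing Implicit Defensive.
Import GRing.Theory.
Local Open Scope ring_scope.

(* If a nonzero form of degree r vanished at (v1, v2), the ratio t = v1 / v2
   would be a root of a nonzero polynomial over F_q, hence fixed by some power
   of the q-Frobenius; the F-automorphisms of E (which fix F_q) then act on t
   as powers of that Frobenius, so any two of them commute on t.  Comparing
   the two ways of applying the transvections [[1,1],[0,1]] and [[1,0],[b,1]]
   of SL(2,q) to t gives b v1^2 + (b + 2) v1 v2 + v2^2 = 0 for every b <> 0,
   and two distinct such b (there are some since q > 2) force
   v1 (v1 + v2) = 0, contradicting the independence of v1 and v2. *)

Section FrobeniusPower.
Variables (E : fieldType) (N : nat).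

(* The unused proof argument is what the rmorphism instances below hang on. *)
Definition pnat_frobenius (_ : [pchar E].-nat N) (x : E) := x ^+ N.

Hypothesis pcharN : [pchar E].-nat N.

Fact pnat_frobenius_is_nmod_morphism : nmod_morphism (pnat_frobenius pcharN).
Proof.
split=> [|x y]; last exact: exprDn_pchar.
by rewrite /pnat_frobenius expr0n; case/andP: pcharN => /lt0n_neq0/negbTE ->.
Qed.

Fact pnat_frobenius_is_monoid_morphism : monoid_morphism (pnat_frobenius pcharN).
Proof. by split=> [|x y]; rewrite /pnat_frobenius ?expr1n ?exprMn. Qed.

HB.instance Definition _ := GRing.isNmodMorphism.Build E E (pnat_frobenius pcharN)
  pnat_frobenius_is_nmod_morphism.
HB.instance Definition _ := GRing.isMonoidMorphism.Build E E (pnat_frobenius pcharN)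
  pnat_frobenius_is_monoid_morphism.

End FrobeniusPower.

Section FiniteSubfield.
Variables (K : finFieldType) (E : fieldType) (A : {rmorphism K -> E}).
Local Notation q := #|K|.

Lemma expf_card_image c : c ^+ q = c -> exists b, c = A b.
Proof.
move=> cq; have : root (map_poly A ('X^q - 'X)) c.
  by rewrite rmorphB /= map_polyXn map_polyX rootE !hornerE cq subrr.
rewrite finField_genPoly rmorph_prod.
rewrite (eq_bigr (fun b => 'X - (A b)%:P)) => [|b _]; last exact: map_polyXsubC.
rewrite -(big_map A xpredT (fun z => 'X - z%:P)) root_prod_XsubC.
by case/mapP=> b _ ->; exists b.
Qed.

Hypothesis pcharq : [pchar E].-nat q.

Lemma map_poly_frobenius_card (g : {poly K}) :
  map_poly (pnat_frobenius pcharq) (map_poly A g) = map_poly A g.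
Proof.
rewrite -map_poly_comp; apply: eq_map_poly => b /=.
by rewrite /pnat_frobenius -rmorphXn expf_card.
Qed.

Lemma root_map_expf_card (g : {poly K}) x :
  root (map_poly A g) x -> root (map_poly A g) (x ^+ q).
Proof.
move=> /eqP gx; apply/eqP.
by rewrite -{1}map_poly_frobenius_card (horner_map (pnat_frobenius pcharq)) gx rmorph0.
Qed.

Lemma root_map_expf_period (g : {poly K}) t : g != 0 -> root (map_poly A g) t ->
  exists2 n, (0 < n)%N & t ^+ (q ^ n)%N = t.
Proof.
move=> g_neq0 gt; set G := map_poly A g.
have G_neq0 : G != 0 by rewrite map_poly_eq0.
have rootG i : root G (t ^+ (q ^ i)%N).
  by elim: i => [|i IHi]; rewrite ?expr1 // expnSr exprM root_map_expf_card.
set s := [seq t ^+ (q ^ i)%N | i <- iota 0 (size G)].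
have /(uniqPn 0)[i [j [lt_ij]]] : ~~ uniq s.
  apply/negP=> s_uniq.
  suff /(max_poly_roots G_neq0)/(_ s_uniq) : all (root G) s.
    by rewrite size_map size_iota ltnn.
  by apply/allP=> _ /mapP[i _ ->].
rewrite /s size_map size_iota => lt_jG.
rewrite !(nth_map 0%N) ?size_iota ?(ltn_trans lt_ij) // !nth_iota ?(ltn_trans lt_ij) //.
rewrite !add0n => eq_ij; exists (j - i)%N; first by rewrite subn_gt0.
have pcharqi : [pchar E].-nat (q ^ i)%N by rewrite pnatX pcharq.
apply: (fmorph_inj (pnat_frobenius pcharqi)) => /=.
by rewrite /pnat_frobenius -exprM -expnD subnK ?eq_ij // ltnW.
Qed.

Lemma frobenius_orbit_conj t n (s : {rmorphism E -> E}) :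
  (0 < n)%N -> t ^+ (q ^ n)%N = t -> (forall b, s (A b) = A b) ->
  exists i, s t = t ^+ (q ^ i)%N.
Proof.
case: n => // n _ tn fixA.
(* The Frobenius permutes the orbit of t, so the orbit polynomial h has
   coefficients in K and is therefore fixed by s. *)
pose h := \prod_(0 <= i < n.+1) ('X - (t ^+ (q ^ i)%N)%:P).
have frob_h : map_poly (pnat_frobenius pcharq) h = h.
  rewrite rmorph_prod /=.
  under eq_bigr do rewrite map_polyXsubC /= /pnat_frobenius -exprM -expnSr.
  by rewrite big_nat_recr //= tn [RHS]big_nat_recl // mulrC expn0 expr1.
have fix_h : map_poly s h = h.
  apply/polyP=> j; rewrite coef_map /=.
  have /expf_card_image[b ->] : h`_j ^+ q = h`_j.
    by rewrite -[in RHS]frob_h coef_map.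
  exact: fixA.
have root_h x : root h x = (x \in [seq t ^+ (q ^ i)%N | i <- index_iota 0 n.+1]).
  by rewrite -root_prod_XsubC big_map.
have /(rmorph_root s) : root h t by rewrite root_h; apply/mapP; exists 0%N.
by rewrite fix_h root_h => /mapP[i _ ->]; exists i.
Qed.

Lemma root_map_conj_commute (g : {poly K}) t (s1 s2 : {rmorphism E -> E}) :
  g != 0 -> root (map_poly A g) t ->
  (forall b, s1 (A b) = A b) -> (forall b, s2 (A b) = A b) ->
  s1 (s2 t) = s2 (s1 t).
Proof.
move=> g_neq0 gt fix1 fix2; have [n n_gt0 tn] := root_map_expf_period g_neq0 gt.
have [i s1t] := frobenius_orbit_conj n_gt0 tn fix1.
have [j s2t] := frobenius_orbit_conj n_gt0 tn fix2.
by rewrite s2t rmorphXn s1t rmorphXn s2t -!exprM mulnC.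
Qed.

End FiniteSubfield.

Section Dehomogenization.
Variables (K E : fieldType) (A : {rmorphism K -> E}).

Definition dehomog (D : {mpoly K[2]}) : {poly K} :=
  \sum_(m <- msupp D) D@_m *: 'X^(m ord0).

Lemma mdeg_mnm2 (m : 'X_{1..2}) : mdeg m = (m ord0 + m (lift ord0 ord0))%N.
Proof. by rewrite mdegE !big_ord_recl big_ord0 addn0. Qed.

Lemma eval2_dehomog (D : {mpoly K[2]}) r (v1 v2 t : E) :
  D \is r.-homog -> v1 = t * v2 ->
  eval2 A v1 v2 D = v2 ^+ r * (map_poly A (dehomog D)).[t].
Proof.
move=> /dhomogP homD ->; rewrite /eval2 /mmap /dehomog raddf_sum horner_sum mulr_sumr.
apply: eq_big_seq => m /homD <-.
rewrite /= map_polyZ map_polyXn hornerZ hornerXn mdeg_mnm2 /mmap1.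
rewrite !big_ord_recl big_ord0 /= mulr1 exprMn exprD.
ring.
Qed.

Lemma dehomog_neq0 (D : {mpoly K[2]}) r : D \is r.-homog -> D != 0 -> dehomog D != 0.
Proof.
move=> /dhomogP homD; rewrite -msupp_eq0.
case def_supp: (msupp D) => [//|m s] _.
have supp_m : m \in msupp D by rewrite def_supp mem_head.
apply/eqP=> /(congr1 (fun g : {poly K} => g`_(m ord0))).
rewrite /dehomog coef0 coef_sum (bigD1_seq m supp_m (msupp_uniq D)) /=.
rewrite coefZ coefXn eqxx mulr1 big1_seq ?addr0 => [|m' /andP[m'_neq_m supp_m']].
  by apply/eqP; rewrite -mcoeff_msupp.
rewrite coefZ coefXn; case: eqP => [eq_m0|]; last by rewrite mulr0.
case/negP: m'_neq_m; apply/eqP/mnmP=> i.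
have : mdeg m' = mdeg m := etrans (homD m' supp_m') (esym (homD m supp_m)).
rewrite !mdeg_mnm2 eq_m0 => /addnI eq_m1.
case: i => [[|[|//]] lt_i2].
- by rewrite (_ : Ordinal _ = ord0) ?eq_m0 //; apply: val_inj.
- by rewrite (_ : Ordinal _ = lift ord0 ord0) ?eq_m1 //; apply: val_inj.
Qed.
End Dehomogenization.

Lemma det_mx22 (R : comNzRingType) (M : 'M[R]_2) :
  \det M = M ord0 ord0 * M ord_max ord_max - M ord0 ord_max * M ord_max ord0.
Proof.
rewrite (expand_det_row _ ord0) !big_ord_recl big_ord0 addr0 /cofactor.
rewrite !det_mx11 !mxE /= expr0 expr1.
have -> : lift (lift ord0 ord0) (0 : 'I_1) = ord0 :> 'I_2 by apply: val_inj.
have -> : lift ord0 (0 : 'I_1) = ord_max :> 'I_2 by apply: val_inj.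
ring.
Qed.

Lemma finField_exists_neq01 (K : finFieldType) :
  (2 < #|K|)%N -> exists b : K, (b != 0) && (b != 1).
Proof.
move=> K_gt2; apply/existsP; apply: contraTT K_gt2 => /existsPn K01.
rewrite -leqNgt -cardsT (leq_trans (subset_leq_card (_ : _ \subset [set 0; 1]))) //.
  by apply/subsetP=> x _; rewrite !inE; have := K01 x; rewrite negb_and !negbK orbC.
by rewrite cards2 ltnS leq_b1.
Qed.

Lemma transvection_commute_quadratic (L : fieldType) (u w b : L)
    (sU sL : {rmorphism L -> L}) :
  b != 0 -> b * u + w != 0 -> b * (u + w) + w != 0 ->
  sU u = u + w -> sU w = w -> sU b = b -> sL u = u -> sL w = b * u + w ->
  sL (sU (u / w)) = sU (sL (u / w)) ->
  b * u ^+ 2 + (b + 2) * u * w + w ^+ 2 = 0.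
Proof.
move=> b_neq0 d1 d2 sUu sUw sUb sLu sLw.
rewrite !fmorph_div sUu sUw sLw sLu !rmorphD rmorphM sUb sUu sUw sLu sLw.
move/eqP; rewrite eqr_div // => /eqP eq_cross.
have : b * (b * u ^+ 2 + (b + 2) * u * w + w ^+ 2) =
  (u + (b * u + w)) * (b * (u + w) + w) - (u + w) * (b * u + w) by ring.
by rewrite eq_cross subrr => /eqP; rewrite mulf_eq0 (negbTE b_neq0) => /eqP.
Qed.

Section SL2Ratio.
Variables (K : finFieldType) (F : fieldType) (E : splittingFieldType F).
Variables (iota : {rmorphism K -> F}) (v1 v2 : E).

Let A : {rmorphism K -> E} := (in_alg E \o iota)%FUN.

Hypothesis indep : forall b1 b2 : K, A b1 * v1 + A b2 * v2 = 0 -> b1 = 0 /\ b2 = 0.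

Hypothesis SL2_gal : forall M : 'M[K]_2, \det M = 1 ->
  exists2 s, s \in 'Gal((fullv : {vspace E}) / 1%VS)%g &
    s v1 = A (M ord0 ord0) * v1 + A (M ord0 ord_max) * v2 /\
    s v2 = A (M ord_max ord0) * v1 + A (M ord_max ord_max) * v2.

Lemma lin_comb_neq0 b1 b2 : (b1 != 0) || (b2 != 0) -> A b1 * v1 + A b2 * v2 != 0.
Proof. by apply: contraL => /eqP/indep[-> ->]; rewrite eqxx. Qed.

Lemma gal_fixA (s : gal_of (fullv : {vspace E})) b : s (A b) = A b.
Proof. exact: rmorph_alg. Qed.

Lemma gal_of_det1 a b c d : a * d - b * c = 1 ->
  exists s : gal_of (fullv : {vspace E}),
    s v1 = A a * v1 + A b * v2 /\ s v2 = A c * v1 + A d * v2.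
Proof.
move=> det1.
pose M : 'M[K]_2 := \matrix_(i, j) if i == ord0 then (if j == ord0 then a else b)
                                   else (if j == ord0 then c else d).
have [|s _ sv] := @SL2_gal M; last by exists s; rewrite !mxE in sv.
by rewrite det_mx22 !mxE.
Qed.

Lemma v1_neq0 : v1 != 0.
Proof.
by have := @lin_comb_neq0 1 0; rewrite (rmorph0 A) (rmorph1 A) mul0r addr0 mul1r oner_neq0; apply.
Qed.

Lemma v2_neq0 : v2 != 0.
Proof.
by have := @lin_comb_neq0 0 1; rewrite (rmorph0 A) (rmorph1 A) mul0r add0r mul1r oner_neq0 orbT; apply.
Qed.

Lemma v1Dv2_neq0 : v1 + v2 != 0.
Proof. by have := @lin_comb_neq0 1 1; rewrite (rmorph1 A) !mul1r oner_neq0; apply. Qed.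

Lemma gal_commute_ratio_quadratic b :
  (forall s1 s2 : gal_of (fullv : {vspace E}), s1 (s2 (v1 / v2)) = s2 (s1 (v1 / v2))) ->
  b != 0 -> A b * v1 ^+ 2 + (A b + 2) * v1 * v2 + v2 ^+ 2 = 0.
Proof.
move=> comm b_neq0.
have [|sU [sUv1 sUv2]] := @gal_of_det1 1 1 0 1; first by rewrite mulr1 mulr0 subr0.
have [|sL [sLv1 sLv2]] := @gal_of_det1 1 0 b 1; first by rewrite mul1r mul0r subr0.
rewrite (rmorph0 A) (rmorph1 A) mul0r !mul1r add0r in sUv1 sUv2.
rewrite (rmorph0 A) (rmorph1 A) mul0r !mul1r addr0 in sLv1 sLv2.
apply: (transvection_commute_quadratic (sU := gal_repr sU) (sL := gal_repr sL)) => //.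
- by rewrite fmorph_eq0.
- by rewrite -[v2]mul1r -(rmorph1 A) lin_comb_neq0 ?b_neq0.
- have -> : A b * (v1 + v2) + v2 = A b * v1 + A (b + 1) * v2.
    by rewrite rmorphD (rmorph1 A); ring.
  by rewrite lin_comb_neq0 ?b_neq0.
- exact: gal_fixA.
- exact: comm.
Qed.

Lemma gal_noncommute_ratio : (2 < #|K|)%N ->
  ~ (forall s1 s2 : gal_of (fullv : {vspace E}), s1 (s2 (v1 / v2)) = s2 (s1 (v1 / v2))).
Proof.
move=> K_gt2 comm; have [b /andP[b_neq0 b_neq1]] := finField_exists_neq01 K_gt2.
have /eqP : (A 1 - A b) * (v1 * (v1 + v2)) = 0.
  rewrite -(subrr 0) -{1}(gal_commute_ratio_quadratic comm (oner_neq0 _)).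
  by rewrite -(gal_commute_ratio_quadratic comm b_neq0); ring.
rewrite !mulf_eq0 subr_eq0 (inj_eq (fmorph_inj A)) eq_sym.
by rewrite (negbTE b_neq1) (negbTE v1_neq0) (negbTE v1Dv2_neq0).
Qed.

Lemma eval2_homog_inj r (P Q : {mpoly K[2]}) :
  (2 < #|K|)%N -> [pchar E].-nat #|K| -> P \is r.-homog -> Q \is r.-homog ->
  eval2 A v1 v2 P = eval2 A v1 v2 Q -> P = Q.
Proof.
move=> K_gt2 pcharq homP homQ eq_ev.
apply/eqP; rewrite -subr_eq0; apply/negPn/negP => D_neq0.
have homD : P - Q \is r.-homog by rewrite rpredB.
have root_ratio : root (map_poly A (dehomog (P - Q))) (v1 / v2).
  have : eval2 A v1 v2 (P - Q) = 0 by move: eq_ev; rewrite /eval2 mmapB => ->; rewrite subrr.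
  rewrite (eval2_dehomog A homD (esym (divfK v2_neq0 v1))) => /eqP.
  by rewrite mulf_eq0 expf_eq0 (negbTE v2_neq0) andbF.
apply: (gal_noncommute_ratio K_gt2) => s1 s2.
exact: (root_map_conj_commute pcharq (dehomog_neq0 homD D_neq0) root_ratio
  (gal_fixA s1) (gal_fixA s2)).
Qed.

End SL2Ratio.

Theorem theorem7p11
  (p q : nat) (K : finFieldType) (F : fieldType) (iota : {rmorphism K -> F})
  (E : splittingFieldType F) (a0 a1 a2 : F) (v1 v2 : E) :
  prime p -> (exists k : nat, q = p ^ k)%N -> (2 < q)%N ->
  p \in [pchar F] ->
  #|K| = q ->
  regular_ext iota ->
  a2 != 0 ->
  irreducible_poly (qpoly2 q a0 a1 a2 %/ 'X) ->
  splittingFieldFor 1%VS (map_poly (in_alg E) (qpoly2 q a0 a1 a2)) fullv ->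
  (* v1, v2 is an F_q-basis of the space V of roots of L in E *)
  root (map_poly (in_alg E) (qpoly2 q a0 a1 a2)) v1 ->
  root (map_poly (in_alg E) (qpoly2 q a0 a1 a2)) v2 ->
  (forall b1 b2 : K, (iota b1)%:A * v1 + (iota b2)%:A * v2 = 0 -> b1 = 0 /\ b2 = 0) ->
  (forall w : E, root (map_poly (in_alg E) (qpoly2 q a0 a1 a2)) w ->
     exists b1 b2 : K, w = (iota b1)%:A * v1 + (iota b2)%:A * v2) ->
  (* the Galois group, as a subgroup of GL(2,q) via the basis v1, v2, contains SL(2,q) *)
  (forall M : 'M[K]_2, \det M = 1 ->
     exists2 s, s \in 'Gal((fullv : {vspace E}) / 1%VS)%g &
       s v1 = (iota (M ord0 ord0))%:A * v1 + (iota (M ord0 ord_max))%:A * v2 /\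
       s v2 = (iota (M ord_max ord0))%:A * v1 + (iota (M ord_max ord_max))%:A * v2) ->
  forall r : nat, (0 < r)%N ->
  forall P Q : {mpoly K[2]}, P \is r.-homog -> Q \is r.-homog ->
    eval2 (fun b => (iota b)%:A) v1 v2 P = eval2 (fun b => (iota b)%:A) v1 v2 Q ->
    P = Q.
Proof.
move=> p_prime [k def_q] q_gt2 pcharFp card_K _ _ _ _ _ _ indep _ SL2_gal r _ P Q.
have pcharq : [pchar E].-nat #|K|.
  by rewrite card_K def_q pnatX (pnatE _ p_prime) (rmorph_pchar (in_alg E) pcharFp).
rewrite -card_K in q_gt2.
exact: (eval2_homog_inj indep SL2_gal q_gt2 pcharq).
Qed.
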